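(* For all $k \ge 2$ and $n \ge 6$, \[ w(n,k) = w(n-1,k-1) + w(n-2,k), \] where $w(m,j)$ is the number of compositions of $m$ with all parts in $\{1,2\}$ having exactly $j$ water cells.
   Context: A composition of $n \ge 0$ is a finite sequence $(c_1,\dots,c_t)$ of positive integers with $c_1+\cdots+c_t=n$; the empty composition is the unique composition of $0$. Let $C_{12}(n)$ be the set of compositions of $n$ all of whose parts lie in $\{1,2\}$. The number of water cells of a composition $(c_1,\dots,c_t)$ is $\sum_{i=1}^{t} \max\bigl(0, \min(\max_{j \le i} c_j, \max_{j \ge i} c_j) - c_i\bigr)$ (the number of unit squares that would hold water poured over its bargraph, in which column $i$ has height $c_i$). For $n,k \ge 0$, $W(n,k)$ is the set of compositions in $C_{12}(n)$ with exactly $k$ water cells and $w(n,k)=|W(n,k)|$. *)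

From mathcomp Require Import all_boot.
Set Implicit Arguments. Unset Strict Implicit. Unset Printing Implicit Defensive.

(* A composition is a seq nat of positive parts; its bargraph has column i of
   height c_i. *)

Definition water_at (c : seq nat) (i : nat) : nat :=
  let lmax := \max_(j <- take i.+1 c) j in
  let rmax := \max_(j <- drop i c) j in
  minn lmax rmax - nth 0 c i.   (* truncated subtraction = max(0, .) *)

Definition water (c : seq nat) : nat :=
  \sum_(i < size c) water_at c i.

Definition is_comp12 (n : nat) (c : seq nat) : bool :=
  all (fun x => (x == 1) || (x == 2)) c && (sumn c == n).

Fixpoint seqs12 (m : nat) : seq (seq nat) :=
  if m is m'.+1 then [seq x :: s | x <- [:: 1; 2], s <- seqs12 m'] else [:: [::]].

(* Every composition in C_{12}(n) has at most n parts, so this finite list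
   (without duplicates) contains all candidates. *)
Definition cands12 (n : nat) : seq (seq nat) :=
  flatten [seq seqs12 m | m <- iota 0 n.+1].

Definition Wset (n k : nat) : seq (seq nat) :=
  [seq c <- cands12 n | is_comp12 n c && (water c == k)].

Definition w (n k : nat) : nat := size (undup (Wset n k)).

From mathcomp Require Import all_boot.
From mathcomp Require Import zify.

Set Implicit Arguments. Unset Strict Implicit. Unset Printing Implicit Defensive.

(* Scan a composition from the left, keeping the running prefix maximum as a
   wall.  A part 2 raises the wall to 2 and holds no water; a part 1 holds no
   water behind a wall of height 1, and behind a wall of height 2 it holds
   exactly one cell iff some later part is a 2.  Counting compositions of n
   with k water cells behind a wall of height 1 (this is w n k) and of height
   2, splitting on the first part gives two linear recurrences; for k >= 2 the
   case "1 followed by no 2" only ever contributes water 0, so the wall-2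
   counts satisfy w2(n,k) = w2(n-1,k-1) + w2(n-2,k), and an induction on n
   transfers this recurrence to w. *)

Notation all12 := (all (fun x : nat => (x == 1) || (x == 2))).

Fixpoint comps12 (n : nat) : seq (seq nat) :=
  match n with
  | 0 => [:: [::]]
  | 1 => [:: [:: 1]]
  | (m.+1 as m1).+1 => map (cons 1) (comps12 m1) ++ map (cons 2) (comps12 m)
  end.

Lemma comps12SS m :
  comps12 m.+2 = map (cons 1) (comps12 m.+1) ++ map (cons 2) (comps12 m).
Proof. by []. Qed.

Lemma mem_map_cons (x y : nat) c s :
  (y :: c \in map (cons x) s) = (y == x) && (c \in s).
Proof.
apply/mapP/andP => [[d ds [-> ->]]|[/eqP -> cs]]; first by split.
by exists c.
Qed.

Lemma nil_notin_map_cons (x : nat) s : ([::] \in map (cons x) s) = false.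
Proof. by apply/negbTE/negP => /mapP []. Qed.

Lemma mem_comps12 n c : (c \in comps12 n) = all12 c && (sumn c == n).
Proof.
elim/ltn_ind: n c => -[|[|m]] IH c.
- case: c => [|x c] //=; rewrite in_cons in_nil orbF /=.
  by case: x => [|x] //=; rewrite addSn andbF.
- case: c => [|x c] //=; rewrite in_cons in_nil orbF /= eqseq_cons.
  case: x => [|[|[|x]]] //=.
  + rewrite add1n eqSS; case: c => [|y c] //=.
    by case: y => [|y] //=; rewrite addSn andbF.
  + by rewrite addnC !addnS /= andbF.
- rewrite comps12SS mem_cat; case: c => [|x c]; first by rewrite !nil_notin_map_cons.
  rewrite !mem_map_cons !IH //=.
  by case: x => [|[|[|x]]] //=; rewrite orbF add1n eqSS.
Qed.

Lemma comps12_uniq n : uniq (comps12 n).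
Proof.
elim/ltn_ind: n => -[|[|m]] IH //.
rewrite comps12SS cat_uniq !map_inj_uniq ?IH //; try by move=> a b [].
rewrite andbT; apply/hasPn => _ /mapP [e _ ->].
by rewrite mem_map_cons.
Qed.

Lemma mem_seqs12 m c : (c \in seqs12 m) = (size c == m) && all12 c.
Proof.
elim: m c => [|m IH] [|x c] //=; rewrite cats0 mem_cat ?nil_notin_map_cons //.
rewrite !mem_map_cons !IH /= eqSS.
by case: x => [|[|[|x]]] //=; rewrite ?andbF ?orbF.
Qed.

Lemma size_le_sumn12 c : all12 c -> size c <= sumn c.
Proof. by elim: c => [|x c IH] //= /andP [/orP [] /eqP -> /IH]; lia. Qed.

Lemma mem_cands12 c : all12 c -> c \in cands12 (sumn c).
Proof.
move=> c12; apply/flattenP; exists (seqs12 (size c)).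
  by apply: map_f; rewrite mem_iota ltnS size_le_sumn12.
by rewrite mem_seqs12 eqxx.
Qed.

Lemma w_count n k : w n k = count (fun c => water c == k) (comps12 n).
Proof.
rewrite /w -size_filter; apply/perm_size/uniq_perm.
- exact: undup_uniq.
- by rewrite filter_uniq // comps12_uniq.
move=> c; rewrite mem_undup !mem_filter mem_comps12 /is_comp12.
case: (boolP (all12 c && (sumn c == n))) => [/andP [c12 /eqP <-]|_].
  by rewrite mem_cands12 // andbT.
by rewrite !andbF.
Qed.

Definition seqmax (s : seq nat) : nat := \max_(j <- s) j.

Lemma seqmax_cons x s : seqmax (x :: s) = maxn x (seqmax s).
Proof. by rewrite /seqmax big_cons. Qed.

Lemma seqmax12 c : all12 c -> seqmax c <= 2 /\ (seqmax c == 2) = (2 \in c).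
Proof.
elim: c => [|x c IH] /=; first by rewrite /seqmax big_nil.
case/andP => /orP x12 /IH [le2 eq2]; rewrite seqmax_cons in_cons -eq2.
by case: x12 => /eqP ->; split; lia.
Qed.

(* [water_wall m c]: the water held by [c] when a column of height [m] stands
   immediately to its left; [m] is the running prefix maximum. *)
Fixpoint water_wall (m : nat) (c : seq nat) : nat :=
  if c is x :: c' then
    (minn (maxn m x) (maxn x (seqmax c')) - x) + water_wall (maxn m x) c'
  else 0.

Lemma water_wallE m c : water_wall m c =
  \sum_(i < size c)
    (minn (maxn m (seqmax (take i.+1 c))) (seqmax (drop i c)) - nth 0 c i).
Proof.
elim: c m => [|x c IH] m; first by rewrite big_ord0.
rewrite /= big_ord_recl /= IH; congr (_ + _).
  by rewrite take0 !seqmax_cons /seqmax big_nil maxn0.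
by apply: eq_bigr => i _; rewrite /= seqmax_cons maxnA.
Qed.

Lemma water_wall0 c : water c = water_wall 0 c.
Proof. by rewrite water_wallE; apply: eq_bigr => i _; rewrite /water_at max0n. Qed.

Lemma water_wall01 c : all12 c -> water_wall 0 c = water_wall 1 c.
Proof. by case: c => [|x c] //= /andP [/orP [] /eqP ->]. Qed.

Lemma water_wall1_cons1 c : water_wall 1 (1 :: c) = water_wall 1 c.
Proof. by rewrite /= (_ : minn 1 _ - 1 = 0) //; lia. Qed.

Lemma water_wall1_cons2 c : water_wall 1 (2 :: c) = water_wall 2 c.
Proof. by rewrite /= (_ : minn 2 _ - 2 = 0) //; lia. Qed.

Lemma water_wall2_cons2 c : water_wall 2 (2 :: c) = water_wall 2 c.
Proof. by rewrite /= (_ : minn 2 _ - 2 = 0) //; lia. Qed.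

Lemma water_wall2_cons1 c :
  all12 c -> water_wall 2 (1 :: c) = (2 \in c) + water_wall 2 c.
Proof.
move=> /seqmax12 [le2 <-]; rewrite /=; congr (_ + _).
by case: (ltngtP (seqmax c) 2); lia.
Qed.

Lemma water_wall2_no2 c : all12 c -> 2 \notin c -> water_wall 2 c = 0.
Proof.
elim: c => [|x c IH] // /andP [/orP x12 c12]; rewrite in_cons => /norP [x2 no2].
case: x12 => /eqP x1; last by rewrite x1 in x2.
by rewrite x1 water_wall2_cons1 // (negbTE no2) IH.
Qed.

Definition w1 (n k : nat) : nat :=
  count (fun c => water_wall 1 c == k) (comps12 n).
Definition w2 (n k : nat) : nat :=
  count (fun c => water_wall 2 c == k) (comps12 n).

Lemma w_w1 n k : w n k = w1 n k.
Proof.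
rewrite w_count; apply: eq_in_count => c.
by rewrite mem_comps12 => /andP [c12 _]; rewrite water_wall0 water_wall01.
Qed.

Lemma w1SS m k : w1 m.+2 k = w1 m.+1 k + w2 m k.
Proof.
rewrite /w1 /w2 comps12SS count_cat !count_map.
congr (_ + _); apply: eq_count => c.
  exact: (congr1 (fun t => t == k) (water_wall1_cons1 c)).
exact: (congr1 (fun t => t == k) (water_wall1_cons2 c)).
Qed.

Lemma w2SS m k : 2 <= k -> w2 m.+2 k = w2 m.+1 k.-1 + w2 m k.
Proof.
move=> k_ge2; rewrite /w2 comps12SS count_cat !count_map.
congr (_ + _); last first.
  by apply: eq_count => c; exact: (congr1 (fun t => t == k) (water_wall2_cons2 c)).
apply: eq_in_count => c; rewrite mem_comps12 => /andP [c12 _].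
change ((water_wall 2 (1 :: c) == k) = (water_wall 2 c == k.-1)).
rewrite water_wall2_cons1 //.
case: (boolP (2 \in c)) => [_|no2].
  by rewrite add1n; case: k k_ge2.
by rewrite water_wall2_no2 //; case: k k_ge2 => [|[|k]].
Qed.

Lemma w1_small n k : n <= 1 -> w1 n k.+1 = 0.
Proof.
case: n => [|[|n]] // _.
by change ((water_wall 1 [:: 1] == k.+1) + 0 = 0); rewrite water_wall1_cons1.
Qed.

Lemma w2_small n k : n <= 1 -> w2 n k.+1 = 0.
Proof.
case: n => [|[|n]] // _.
by change ((water_wall 2 [:: 1] == k.+1) + 0 = 0); rewrite water_wall2_cons1.
Qed.

Lemma w1_2 k : w1 2 k.+1 = 0.
Proof. by rewrite w1SS !w1_small ?w2_small. Qed.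

Lemma w1_rec n k : 2 <= k -> w1 n.+2 k = w1 n.+1 k.-1 + w1 n k.
Proof.
case: k => [|[|k]] // _ /=.
elim: n => [|[|m] IH]; first by rewrite w1_2 !w1_small.
  by rewrite w1SS !w1_2 w2_small ?w1_small.
(* Eliminate the wall-2 counts using w2SS at m. *)
have := w1SS m.+1 k.+1; have := w1SS m k.+2; have := w1SS m.+2 k.+2.
have := @w2SS m k.+2 isT; rewrite [k.+2.-1]/=; lia.
Qed.

Theorem theorem2p4 (n k : nat) (hk : 2 <= k) (hn : 6 <= n) :
  w n k = w (n - 1) (k - 1) + w (n - 2) k.
Proof.
case: n hn => [|[|m]] // _.
by rewrite !w_w1 subn2 !subn1 w1_rec.
Qed.
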